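(* Let $q\in[0,1]$ and let $X_1,\dots,X_m$ be real numbers (observed $z$-statistics) with associated one-sided p-values $P_i=\Phi(X_i)$, where $\Phi$ is the standard normal cumulative distribution function. Let $P_{(1)}\le\dots\le P_{(m)}$ be the ordered p-values, $I^*=\max\{i: P_{(i)}\le (i/m)q\}$ and $P^*=P_{(I^* )}$ (with the convention that if no such $i$ exists the set $\{i:P_i\le P^*\}$ below is empty). Consider the iteration $\mathcal S^1=\{1,\dots,m\}$ and, for $t=1,2,\dots$, $$U_i^t=X_i+\Phi^{-1}\big(1-q|\mathcal S^t|/m\big),\ i\in\mathcal S^t,\qquad \mathcal S^{t+1}=\{i\in\mathcal S^t: U_i^t\le 0\}.$$ Then this iteration converges in finite time: there is a finite $T\ge1$ such that $\mathcal S^{T+1}=\mathcal S^T$ (taking $T$ to be the first such index) and $\mathcal S^t=\mathcal S^T$ for all $t\ge T$. Moreover, $\mathcal S^T=\{i: P_i\le P^*\}$, i.e. the set of hypotheses $H_i:\theta_i\ge 0$ rejected by the Benjamini–Hochberg procedure at level $q$.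
   Context: In the motivating model $X_i\sim\mathcal N(\theta_i,1)$ independently; the iteration is the repeated application of the Benjamini–Yekutieli one-sided confidence interval adjustment $(-\infty,U_i^t)$ followed by keeping only those intervals that do not cover $0$. The Benjamini–Hochberg procedure at level $q$ rejects $H_i$ iff $P_i\le P^*$. *)

From HB Require Import structures.
From mathcomp Require Import all_boot all_order all_algebra.
From mathcomp Require Import all_classical all_reals all_analysis.
Set Implicit Arguments. Unset Strict Implicit. Unset Printing Implicit Defensive.
Import Order.TTheory GRing.Theory Num.Theory.

Local Open Scope classical_set_scope.
Local Open Scope ring_scope.

Definition Phi {R : realType} (x : R) : R :=
  fine (normal_prob 0 1 `]-oo, x]).

(* Quantile (generalized inverse) of Phi, extended-real valued:
   Phiinv p = inf {x | p <= Phi x}.  For p in (0,1) this is the usual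
   Phi^{-1}(p); Phiinv 1 = +oo (empty set), Phiinv 0 = -oo. *)
Definition Phiinv {R : realType} (p : R) : \bar R :=
  ereal_inf [set (x%:E)%E | x in [set x : R | p <= Phi x]].

Definition by_step {R : realType} (m : nat) (X : 'I_m -> R) (q : R)
  (S : {set 'I_m}) : {set 'I_m} :=
  [set i in S |
     ((X i)%:E + Phiinv (1 - q * #|S|%:R / m%:R) <= 0)%E ].

(* S^t for t >= 1:  S^1 = {1..m}, S^{t+1} = by_step S^t. *)
Definition Siter {R : realType} (m : nat) (X : 'I_m -> R) (q : R) (t : nat)
  : {set 'I_m} :=
  iter t.-1 (by_step X q) (finset.setT : {set 'I_m}).

Definition pval {R : realType} (m : nat) (X : 'I_m -> R) (i : 'I_m) : R :=
  Phi (X i).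

(* ordered p-values P_(1) <= ... <= P_(m); P_(k) = psorted`_(k-1) *)
Definition psorted {R : realType} (m : nat) (X : 'I_m -> R) : seq R :=
  sort <=%R [seq pval X i | i <- enum 'I_m].

Definition BH_cand {R : realType} (m : nat) (X : 'I_m -> R) (q : R) : seq nat :=
  seq.filter (fun k : nat => nth 0 (psorted X) k.-1 <= k%:R / m%:R * q) (iota 1 m).

Definition BH_reject {R : realType} (m : nat) (X : 'I_m -> R) (q : R)
  : {set 'I_m} :=
  match BH_cand X q with
  | [::] => (finset.set0 : {set 'I_m})
  | _ :: _ =>
      let Istar := \max_(k <- BH_cand X q) k in
      [set i | pval X i <= nth 0 (psorted X) Istar.-1]
  end.

From HB Require Import structures.
From mathcomp Require Import all_boot all_order all_algebra.
From mathcomp Require Import all_classical all_reals all_analysis.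
From mathcomp Require Import measurable_realfun lra.
Set Implicit Arguments. Unset Strict Implicit. Unset Printing Implicit Defensive.
Import Order.TTheory GRing.Theory Num.Theory.
Local Open Scope ring_scope.

(* [Phi] is right continuous, takes values strictly between 0 and 1 and satisfies
   [Phi (-x) = 1 - Phi x]; hence [X_i + Phi^{-1}(1 - a) <= 0] iff [P_i <= a] for every
   [a >= 0], and one step of the iteration keeps the [i] of [S] with [P_i <= q|S|/m].
   This step only removes elements, so from the full set it reaches a fixed point after
   finitely many steps and stays there.  The BH rejection set [R = {i | P_i <= P*}] lies
   in every iterate: if [S] contains [R] then [|S| >= |R| >= I*], so every [i] in [R]
   has [P_i <= P* <= q I*/m <= q|S|/m].  Conversely a fixed point [S] containing [R]
   satisfies [P_(|S|) <= q|S|/m], so [|S|] is a BH candidate and [|S| <= I* <= |R|],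
   i.e. [S = R]. *)

Section StandardNormal.
Variable R : realType.
Local Open Scope classical_set_scope.
Implicit Types x y t u c : R.

Lemma PhiE x : (Phi x)%:E = normal_prob 0 1 `]-oo, x].
Proof. by rewrite /Phi fineK// fin_num_measure. Qed.

Lemma Phi_le x y : x <= y -> Phi x <= Phi y.
Proof.
move=> xy; rewrite -lee_fin !PhiE; apply: le_measure; rewrite ?inE//.
exact: subitvPr.
Qed.

Lemma normal_pdf01N t : normal_pdf 0 1 (- t) = normal_pdf 0 1 t.
Proof. by rewrite /normal_pdf oner_eq0 /normal_fun !subr0 sqrrN. Qed.

Lemma normal_pdf01_le_norm t u :
  `|t| <= `|u| -> normal_pdf 0 1 u <= normal_pdf 0 1 t.
Proof.
move=> tu; rewrite /normal_pdf oner_eq0 /normal_fun !subr0.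
rewrite ler_pM2l ?normal_peak_gt0 ?oner_neq0// ler_expR !mulNr lerN2.
rewrite ler_pM2r ?invr_gt0 ?expr1n ?mulr2n ?ltr_pwDl//.
by rewrite -(real_normK (num_real t)) -(real_normK (num_real u)) lerXn2r ?nnegrE.
Qed.

Lemma PhiN x : Phi (- x) = 1 - Phi x.
Proof.
apply/EFin_inj; rewrite EFinB !PhiE /normal_prob.
rewrite ge0_integration_by_substitutionNy; last 2 first.
- exact: (@continuous_subspaceT R^o R^o _ _
    (@continuous_normal_pdf R 0 1 (oner_neq0 R))).
- by move=> t _; exact: normal_pdf_ge0.
under eq_integral do rewrite /= normal_pdf01N.
rewrite -integral_itv_obnd_cbnd; last first.
  by apply/measurable_EFinP/measurable_funTS; exact: measurable_normal_pdf.
rewrite -setCitvl.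
exact: (@probability_setC _ _ R (normal_prob 0 1) _ (measurable_itv _)).
Qed.

(* On [x - 1, x] the density is at least its value at [|x| + 1]. *)
Lemma Phi_gt0 x : 0 < Phi x.
Proof.
set k := normal_pdf 0 1 (`|x| + 1).
have k_gt0 : 0 < k.
  by rewrite /k /normal_pdf oner_eq0 mulr_gt0 ?expR_gt0 ?normal_peak_gt0 ?oner_neq0.
rewrite -lte_fin PhiE.
apply: (@lt_le_trans _ _ (normal_prob 0 1 `]x - 1, x])); last first.
  by apply: le_measure; rewrite ?inE//; apply: subset_itvr; rewrite bnd_simp.
apply: (@lt_le_trans _ _ (\int[lebesgue_measure]_(t in `](x - 1)%R, x]) k%:E)%E).
  rewrite integral_cst//= lebesgue_measure_itv/= lte_fin gtrBl ltr01.
  by rewrite -EFinD opprB addrC subrK mule1 lte_fin.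
apply: ge0_le_integral => //.
- by move=> t _; rewrite lee_fin ltW.
- by apply/measurable_EFinP/measurable_funTS; exact: measurable_normal_pdf.
move=> t /=; rewrite in_itv/= => /andP[xt tx].
rewrite lee_fin normal_pdf01_le_norm// [X in _ <= X]ger0_norm ?addr_ge0//.
have := ler_norm x; have := ler_norm (- x); rewrite normrN ler_norml.
by move=> *; apply/andP; split; lra.
Qed.

Lemma Phi_lt1 x : Phi x < 1.
Proof. by rewrite -subr_gt0 -PhiN Phi_gt0. Qed.

Let idTR : measurableTypeR R -> R := idfun.
#[local] HB.instance Definition _ :=
  @isMeasurableFun.Build _ _ _ _ idTR (@measurable_id _ _ setT).

(* Right continuity of [Phi] and its limit at [+oo] are those of the cdf of [Z]. *)
Let Z : {RV normal_prob (0 : R) 1 >-> R} := idTR.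

Let cdfZE : cdf Z = (fun x => (Phi x)%:E).
Proof.
by apply/funext => x; rewrite PhiE /cdf /distribution /pushforward preimage_id.
Qed.

Lemma Phi_ge_right c y : (forall z, y < z -> c <= Phi z) -> c <= Phi y.
Proof.
move=> cPhi; have := @cdf_right_continuous _ _ _ _ Z y.
rewrite cdfZE => /fine_cvg Phi_cvg.
apply: (cvgr_to_ge Phi_cvg).
by near=> z; apply: cPhi; near: z; exact: nbhs_right_gt.
Unshelve. all: by end_near.
Qed.

Lemma exists_Phi_gt c : c < 1 -> exists x, c < Phi x.
Proof.
move=> c1; have := @cvg_cdfy1 _ _ _ _ Z.
rewrite cdfZE => /fine_cvg Phi_cvg.
have [M [_ PhiM]] := cvgr_gt 1 Phi_cvg c c1.
by exists (M + 1); apply: PhiM; rewrite ltrDl.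
Qed.

End StandardNormal.

Section Quantile.
Variable R : realType.
Local Open Scope classical_set_scope.
Implicit Types x c a : R.

Lemma PhiinvNy c : c <= 0 -> Phiinv c = -oo%E.
Proof.
move=> c_le0.
have Phiinv_le r : (Phiinv c <= r%:E)%E.
  apply: ereal_inf_lbound; exists r => //=.
  exact: le_trans c_le0 (ltW (Phi_gt0 r)).
move: Phiinv_le; case: (Phiinv c) => [s| |]// Phiinv_le.
- by have := Phiinv_le (s - 1); rewrite lee_fin => ?; exfalso; lra.
- by have := Phiinv_le 0.
Qed.

Lemma Phiinvy c : 1 <= c -> Phiinv c = +oo%E.
Proof.
move=> c_ge1; rewrite /Phiinv.
suff -> : [set x : R | c <= Phi x] = set0 by rewrite image_set0 ereal_inf0.
apply/seteqP; split => x //= cx.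
by have := lt_le_trans (Phi_lt1 x) (le_trans c_ge1 cx); rewrite ltxx.
Qed.

(* Monotonicity and right continuity of [Phi] make [{x | c <= Phi x}] a closed half-line. *)
Lemma PhiinvE c : 0 < c < 1 ->
  exists y : R, Phiinv c = y%:E /\ forall x, (c <= Phi x) = (y <= x).
Proof.
move=> /andP[c_gt0 c_lt1].
set S := [set x : R | c <= Phi x].
have S_neq0 : S !=set0.
  by have [x cx] := exists_Phi_gt c_lt1; exists x; exact: ltW.
have S_lbound : has_lbound S.
  have [M PhiM] : exists M, 1 - c < Phi M by apply: exists_Phi_gt; lra.
  exists (- M) => x; rewrite /S /= => cx; rewrite leNgt; apply/negP => xM.
  by have := Phi_le (ltW xM); rewrite PhiN; lra.
exists (inf S); split; first by rewrite /Phiinv ereal_inf_EFin.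
move=> x; apply/idP/idP => [cx|infx]; first exact: ge_inf.
apply: le_trans (Phi_le infx); apply: Phi_ge_right => z infz.
have [w Sw wz] := inf_lt S_neq0 infz.
exact: le_trans Sw (Phi_le (ltW wz)).
Qed.

Lemma add_Phiinv_le0 x a : 0 <= a ->
  ((x%:E + Phiinv (1 - a) <= 0)%E = (Phi x <= a)).
Proof.
move=> a_ge0.
have [a_ge1|a_lt1] := leP 1 a.
  rewrite PhiinvNy ?addeNy ?leNye; last by lra.
  by rewrite (le_trans (ltW (Phi_lt1 x))).
have [->|a_neq0] := eqVneq a 0.
  by rewrite subr0 Phiinvy// addey// leye_eq lt_geF ?Phi_gt0.
have [y [-> Phi_ge]] := PhiinvE (c := 1 - a) ltac:(apply/andP; split; lra).
rewrite -EFinD lee_fin; have := Phi_ge (- x); rewrite PhiN lerD2l lerN2 => ->.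
by apply/idP/idP => ?; lra.
Qed.

End Quantile.

Section SortedCount.
Context {disp : Order.disp_t} {T : orderType disp}.
Implicit Types (s : seq T) (v : T).

Lemma sorted_nth_le_count (x0 : T) s v k : sorted <=%O s -> (k < size s)%N ->
  (nth x0 s k <= v)%O = (k < count (fun x => x <= v)%O s)%N.
Proof.
move=> s_sorted ks.
have nth_le i j : (i <= j < size s)%N -> (nth x0 s i <= nth x0 s j)%O.
  move=> /andP[ij js]; apply: (sorted_leq_nth le_trans lexx) => //.
  by rewrite inE (leq_ltn_trans ij js).
apply/idP/idP => [skv|].
  have : all (fun x => x <= v)%O (take k.+1 s).
    apply/(all_nthP x0) => i; rewrite size_takel // => ik.
    by rewrite nth_take// (le_trans _ skv)// nth_le// -ltnS ik.
  rewrite all_count size_takel // => /eqP take_count.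
  by rewrite -(cat_take_drop k.+1 s) count_cat take_count leq_addr.
apply: contraLR; rewrite -ltNge -leqNgt => vsk.
have drop_count : count (fun x => x <= v)%O (drop k s) = 0%N.
  apply/eqP; rewrite -leqn0 leqNgt -has_count; apply/(has_nthP x0) => -[i].
  rewrite size_drop ltn_subRL nth_drop => iks.
  by rewrite leNgt (lt_le_trans vsk)// nth_le// leq_addr.
rewrite -(cat_take_drop k s) count_cat drop_count addn0.
by rewrite -[X in (_ <= X)%N](size_takel (ltnW ks)) count_size.
Qed.

End SortedCount.

Section DeflationaryIteration.
Variables (T : finType) (f : {set T} -> {set T}).
Hypothesis f_sub : forall A, f A \subset A.

Lemma deflationary_iter_fixed (A : {set T}) : exists n, f (iter n f A) = iter n f A.
Proof.
elim: {A}#|A|.+1 {-2}A (ltnSn #|A|) => // k IH A; rewrite ltnS => A_le.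
have [fA_eq|fA_neq] := eqVneq (f A) A; first by exists 0%N.
have [n fixed_n] : exists n, f (iter n f (f A)) = iter n f (f A).
  apply: IH; apply: leq_trans A_le; apply: proper_card.
  by rewrite finset.properEneq fA_neq f_sub.
by exists n.+1; rewrite iterSr.
Qed.

Lemma deflationary_iter_stable (A : {set T}) : exists n,
  [/\ f (iter n f A) = iter n f A,
      forall k, (k < n)%N -> f (iter k f A) <> iter k f A
    & forall k, (n <= k)%N -> iter k f A = iter n f A].
Proof.
have ex_fixed : exists n, f (iter n f A) == iter n f A.
  by have [n fixed_n] := deflationary_iter_fixed A; exists n; apply/eqP.
have [n /eqP fixed_n min_n] := ex_minnP ex_fixed.
exists n; split => // [k kn /eqP fixed_k | k nk].
  by have := min_n k fixed_k; rewrite leqNgt kn.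
by rewrite -(subnK nk) iterD iter_fix.
Qed.

End DeflationaryIteration.

Lemma bigmax_seq_mem (k : nat) (ks : seq nat) : \max_(j <- k :: ks) j \in k :: ks.
Proof.
elim: ks k => [|k' ks IH] k; first by rewrite big_seq1 mem_head.
rewrite big_cons; move: (IH k'); set M := \max_(j <- _) j => M_in.
by rewrite /maxn; case: ltnP => _; rewrite ?mem_head// in_cons M_in orbT.
Qed.

Lemma count_enum (T : finType) (P : pred T) : count P (enum T) = #|[set i | P i]|.
Proof. by rewrite cardsE cardE enumT /enum_mem size_filter. Qed.

Section BenjaminiHochberg.
Variables (R : realType) (m : nat) (X : 'I_m -> R) (q : R).

Lemma size_psorted : size (psorted X) = m.
Proof. by rewrite size_sort size_map size_enum_ord. Qed.

Lemma nth_psorted_le k v : (k < m)%N ->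
  ((psorted X)`_k <= v) = (k < #|[set i | (pval X i <= v)%R]|)%N.
Proof.
move=> km; rewrite sorted_nth_le_count ?size_psorted//; last first.
  exact/sort_sorted/le_total.
by rewrite /psorted (permP (permEl (perm_sort _ _))) count_map count_enum.
Qed.

Lemma card_pval_le_nth_psorted k : (0 < k <= m)%N ->
  (k <= #|[set i | (pval X i <= (psorted X)`_k.-1)%R]|)%N.
Proof.
by move=> /andP[k_gt0 km]; rewrite -(prednK k_gt0) -nth_psorted_le ?prednK.
Qed.

Lemma mem_BH_cand k : (k \in BH_cand X q) =
  (0 < k <= m)%N && ((psorted X)`_k.-1 <= k%:R / m%:R * q).
Proof. by rewrite mem_filter mem_iota add1n ltnS andbC. Qed.

Variant BH_reject_spec : {set 'I_m} -> Prop :=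
| BH_reject_nil of BH_cand X q = [::] : BH_reject_spec finset.set0
| BH_reject_max I of I \in BH_cand X q
    & (forall k, k \in BH_cand X q -> k <= I)%N :
    BH_reject_spec [set i | pval X i <= (psorted X)`_I.-1].

Lemma BH_rejectP : BH_reject_spec (BH_reject X q).
Proof.
rewrite /BH_reject; case cand: (BH_cand X q) => [|k ks]; first exact: BH_reject_nil.
rewrite -cand; apply: BH_reject_max => [|j j_cand].
  by rewrite cand; exact: bigmax_seq_mem.
exact: (@leq_bigmax_seq _ _ xpredT id).
Qed.

Lemma by_step_sub (S : {set 'I_m}) : by_step X q S \subset S.
Proof. by apply/fintype.subsetP => i; rewrite inE => /andP[]. Qed.

Hypothesis q_ge0 : 0 <= q.

Lemma by_stepE (S : {set 'I_m}) :
  by_step X q S = [set i in S | pval X i <= #|S|%:R / m%:R * q].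
Proof.
apply/finset.setP => i; rewrite !inE add_Phiinv_le0 ?mulr_ge0 ?divr_ge0//.
by rewrite [_ / _ * q]mulrC mulrA.
Qed.

Lemma BH_reject_sub_by_step (S : {set 'I_m}) :
  BH_reject X q \subset S -> BH_reject X q \subset by_step X q S.
Proof.
rewrite by_stepE; case: BH_rejectP => [_|I]; first by rewrite !finset.sub0set.
move=> I_cand _ RS; move: (I_cand); rewrite mem_BH_cand => /andP[I_bounds PI].
have I_le_S : (I <= #|S|)%N.
  exact: leq_trans (card_pval_le_nth_psorted I_bounds) (subset_leq_card RS).
have /andP[I_gt0 I_le_m] := I_bounds.
apply/fintype.subsetP => i iR; rewrite inE (fintype.subsetP RS _ iR) /=.
move: iR; rewrite inE => /le_trans -> //; apply: le_trans PI _.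
by rewrite ler_wpM2r// ler_pM2r ?ler_nat// invr_gt0 ltr0n (leq_trans I_gt0 I_le_m).
Qed.

Lemma by_step_fixed_BH_reject (S : {set 'I_m}) :
  BH_reject X q \subset S -> by_step X q S = S -> S = BH_reject X q.
Proof.
move=> RS; rewrite by_stepE => fixed_S.
have [S0|S_gt0] := posnP #|S|.
  by move: RS; rewrite (cards0_eq S0) finset.subset0 => /eqP ->.
have S_le_m : (#|S| <= m)%N by rewrite -[X in (_ <= X)%N]card_ord max_card.
have S_cand : #|S| \in BH_cand X q.
  rewrite mem_BH_cand S_gt0 S_le_m nth_psorted_le ?prednK//=.
  apply: subset_leq_card; apply/fintype.subsetP => i.
  by rewrite -{1}fixed_S !inE => /andP[].
case: BH_rejectP RS => [cand_nil|I I_cand I_max] RS.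
  by rewrite cand_nil in S_cand.
apply/eqP; rewrite eq_sym eqEcard RS /=.
apply: leq_trans (I_max _ S_cand) _; apply: card_pval_le_nth_psorted.
by move: I_cand; rewrite mem_BH_cand => /andP[].
Qed.

End BenjaminiHochberg.

Theorem proposition1 (R : realType) (m : nat) (q : R) (X : 'I_m -> R) :
  (0 < m)%N -> 0 <= q <= 1 ->
  exists T : nat,
    [/\ (1 <= T)%N,
        Siter X q T.+1 = Siter X q T,
        (forall t : nat, (1 <= t)%N -> (t < T)%N -> Siter X q t.+1 <> Siter X q t),
        (forall t : nat, (T <= t)%N -> Siter X q t = Siter X q T)
      & Siter X q T = BH_reject X q].
Proof.
move=> _ /andP[q_ge0 _].
have [n [fixed_n unfixed_lt_n stable_n]] :=
  deflationary_iter_stable (@by_step_sub R m X q) [set: 'I_m].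
have BH_sub_iter k : BH_reject X q \subset iter k (by_step X q) [set: 'I_m].
  elim: k => [|k IH]; first exact: finset.subsetT.
  exact: BH_reject_sub_by_step.
exists n.+1; split => //.
- by case=> // t _; rewrite /Siter ltnS => /unfixed_lt_n.
- by case=> // t; rewrite /Siter ltnS => /stable_n.
- exact: (by_step_fixed_BH_reject q_ge0 (BH_sub_iter n) fixed_n).
Qed.
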